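(* Let $m$ be a positive integer and consider the equation \[ \cos\tfrac{2\pi j}{m}+\cos\tfrac{2\pi \ell}{m}=2\cos\tfrac{2\pi j}{m}\cos\tfrac{2\pi \ell}{m} \qquad (\ast)\] in unknowns $(j,\ell)\in\{0,\dots,m-1\}^2$. If $4\mid m$, then $(\ast)$ has at least $4$ non-trivial solutions. If $5\mid m$, then $(\ast)$ has at least $8$ non-trivial solutions.
   Context: The solution $(j,\ell)=(0,0)$ of $(\ast)$ is called trivial; all other solutions are non-trivial. *)

From Stdlib Require Import Reals Lra Lia List.
Open Scope R_scope.

Definition star_eq (m j l : nat) : Prop :=
  let a := cos (2 * PI * INR j / INR m) in
  let b := cos (2 * PI * INR l / INR m) in
  a + b = 2 * a * b.

Definition nontrivial_sol (m : nat) (p : nat * nat) : Prop :=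
  (fst p < m)%nat /\ (snd p < m)%nat /\ p <> (0%nat, 0%nat) /\ star_eq m (fst p) (snd p).

Definition at_least_nontrivial (m k : nat) : Prop :=
  exists s : list (nat * nat),
    NoDup s /\ (k <= length s)%nat /\ Forall (nontrivial_sol m) s.

From Stdlib Require Import Reals Lra Lia List Arith FinFun.

(* Since (star) only depends on j/m and l/m, solutions modulo 4 and 5 lift to
   solutions (q j, q l) modulo 4q and 5q.  The reflection j |-> m - j fixes
   cos(2 pi j/m), and (star) is symmetric, so it suffices to find one solution
   for each modulus.  For m = 4, cos(pi/2) = 0 gives (1,1).  For m = 5 and
   x = 2 pi/5, product-to-sum gives cos x + cos 2x - 2 cos x cos 2x
   = cos 2x - cos 3x, which vanishes because 3x = 2 pi - 2x; this gives (1,2). *)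

Lemma cos_2PI_frac_mul (m j q : nat) : (0 < q)%nat ->
  cos (2 * PI * INR (j * q) / INR (q * m)) = cos (2 * PI * INR j / INR m).
Proof.
  intros Hq; destruct (Nat.eq_dec m 0) as [->|Hm].
  - now rewrite Nat.mul_0_r, !Rdiv_0_r.
  - assert (INR q <> 0) by (apply not_0_INR; lia).
    assert (INR m <> 0) by (apply not_0_INR; lia).
    f_equal; rewrite !mult_INR; field; auto.
Qed.

Lemma cos_2PI_frac_reflect (m j : nat) : (0 < m)%nat -> (j <= m)%nat ->
  cos (2 * PI * INR (m - j) / INR m) = cos (2 * PI * INR j / INR m).
Proof.
  intros Hm Hj.
  assert (INR m <> 0) by (apply not_0_INR; lia).
  replace (2 * PI * INR (m - j) / INR m) with (2 * PI - 2 * PI * INR j / INR m)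
    by (rewrite minus_INR by exact Hj; field; auto).
  rewrite cos_minus, cos_2PI, sin_2PI; ring.
Qed.

Lemma star_eq_comm (m j l : nat) : star_eq m j l -> star_eq m l j.
Proof. unfold star_eq; lra. Qed.

Lemma star_eq_reflect (m j l : nat) : (0 < m)%nat -> (j <= m)%nat ->
  star_eq m j l -> star_eq m (m - j) l.
Proof. intros Hm Hj; unfold star_eq; now rewrite cos_2PI_frac_reflect. Qed.

Lemma star_eq_mul (m j l q : nat) : (0 < q)%nat ->
  star_eq m j l -> star_eq (q * m) (j * q) (l * q).
Proof. intros Hq; unfold star_eq; now rewrite !cos_2PI_frac_mul. Qed.

Lemma nontrivial_sol_mul (m q : nat) (p : nat * nat) : (0 < q)%nat ->
  nontrivial_sol m p -> nontrivial_sol (q * m) (fst p * q, snd p * q)%nat.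
Proof.
  destruct p as [j l]; unfold nontrivial_sol; cbn.
  intros Hq (Hj & Hl & Hnz & Hstar).
  repeat split; [nia | nia | | now apply star_eq_mul].
  intros Heq; injection Heq as Hj0 Hl0; apply Hnz; f_equal; nia.
Qed.

Lemma at_least_nontrivial_mul (m q k : nat) : (0 < q)%nat ->
  at_least_nontrivial m k -> at_least_nontrivial (q * m) k.
Proof.
  intros Hq (s & Hnd & Hlen & Hsol).
  exists (map (fun p => (fst p * q, snd p * q)%nat) s); repeat split.
  - apply Injective_map_NoDup; [|exact Hnd].
    intros [j l] [j' l'] Heq; injection Heq as Hj Hl; cbn in *; f_equal; nia.
  - now rewrite length_map.
  - apply Forall_map; eapply Forall_impl; [|exact Hsol].
    intros p; now apply nontrivial_sol_mul.
Qed.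

Lemma cos_add_cos_double (x : R) :
  cos x + cos (2 * x) - 2 * cos x * cos (2 * x) = cos (2 * x) - cos (3 * x).
Proof.
  replace (3 * x) with (2 * x + x) by ring.
  replace x with (2 * x - x) at 1 by ring.
  rewrite cos_plus, cos_minus; ring.
Qed.

Lemma star_eq_4_1_1 : star_eq 4 1 1.
Proof.
  unfold star_eq.
  replace (2 * PI * INR 1 / INR 4) with (PI / 2) by (cbn; field).
  rewrite cos_PI2; ring.
Qed.

Lemma star_eq_5_1_2 : star_eq 5 1 2.
Proof.
  pose proof (cos_2PI_frac_reflect 5 2 ltac:(lia) ltac:(lia)) as Hreflect.
  pose proof (cos_add_cos_double (2 * PI / 5)) as Hprod.
  unfold star_eq; cbn [Nat.sub] in *.
  replace (2 * PI * INR 1 / INR 5) with (2 * PI / 5) by (cbn; field).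
  replace (2 * PI * INR 2 / INR 5) with (2 * (2 * PI / 5)) in * by (cbn; field).
  replace (2 * PI * INR 3 / INR 5) with (3 * (2 * PI / 5)) in * by (cbn; field).
  lra.
Qed.

Lemma at_least_nontrivial_4 : at_least_nontrivial 4 4.
Proof.
  pose proof star_eq_4_1_1 as H11.
  pose proof (star_eq_reflect 4 1 1 ltac:(lia) ltac:(lia) H11) as H31.
  pose proof (star_eq_comm _ _ _ H31) as H13.
  pose proof (star_eq_reflect 4 1 3 ltac:(lia) ltac:(lia) H13) as H33.
  cbn [Nat.sub] in *.
  exists ((1, 1) :: (1, 3) :: (3, 1) :: (3, 3) :: nil)%nat.
  repeat split; cbn; try lia.
  - repeat constructor; cbn; intuition discriminate.
  - repeat constructor; cbn; (lia || discriminate || assumption).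
Qed.

Lemma at_least_nontrivial_5 : at_least_nontrivial 5 8.
Proof.
  pose proof star_eq_5_1_2 as H12.
  pose proof (star_eq_reflect 5 1 2 ltac:(lia) ltac:(lia) H12) as H42.
  pose proof (star_eq_comm _ _ _ H12) as H21.
  pose proof (star_eq_comm _ _ _ H42) as H24.
  pose proof (star_eq_reflect 5 2 1 ltac:(lia) ltac:(lia) H21) as H31.
  pose proof (star_eq_reflect 5 2 4 ltac:(lia) ltac:(lia) H24) as H34.
  pose proof (star_eq_comm _ _ _ H31) as H13.
  pose proof (star_eq_comm _ _ _ H34) as H43.
  cbn [Nat.sub] in *.
  exists ((1, 2) :: (1, 3) :: (4, 2) :: (4, 3) ::
          (2, 1) :: (3, 1) :: (2, 4) :: (3, 4) :: nil)%nat.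
  repeat split; cbn; try lia.
  - repeat constructor; cbn; intuition discriminate.
  - repeat constructor; cbn; (lia || discriminate || assumption).
Qed.

Theorem lemmaA1 (m : nat) (hm : (0 < m)%nat) :
  ((Nat.divide 4 m) -> at_least_nontrivial m 4) /\
  ((Nat.divide 5 m) -> at_least_nontrivial m 8).
Proof.
  split; intros [q ->].
  - apply at_least_nontrivial_mul; [lia | exact at_least_nontrivial_4].
  - apply at_least_nontrivial_mul; [lia | exact at_least_nontrivial_5].
Qed.
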